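(* Let $a,p>0$, $g(r;a,p)=a\,e^{-pr^2}$, and $I_{n,k,l}=\int_0^\infty f^k(r)\,g^l(r;a,p)\,r^{2n+1}dr$. If $f$ satisfies condition (1), then $I_{n,k,l}$ exists for all $n,k\in\mathbb{N}_0$ and all $l\in\mathbb{N}$. Moreover, if $f$ satisfies condition (1) and $c_{2n}$ exists, then $I_{n,k,0}$ exists for all $k\in\mathbb{N}$.
   Context: $f:[0,\infty)\to\mathbb{R}$; $c_n=2\pi\int_0^\infty f(r)\,r^{n+1}dr$. Condition (1): there is a constant $F$ with $0\le f(r)\le F$ for all $r\ge0$, $c_0$ exists and $c_0>0$. $\mathbb{N}=\{1,2,\dots\}$, $\mathbb{N}_0=\{0,1,2,\dots\}$. *)

From HB Require Import structures.
From mathcomp Require Import all_boot all_order all_algebra.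
From mathcomp Require Import all_classical all_reals all_analysis.
Set Implicit Arguments. Unset Strict Implicit. Unset Printing Implicit Defensive.
Import Order.TTheory GRing.Theory Num.Theory.
Local Open Scope classical_set_scope.
Local Open Scope ring_scope.

Definition halfline (R : realType) : set R := `[0, +oo[%classic.

Definition gfun (R : realType) (a p : R) (r : R) : R := a * expR (- (p * r ^+ 2)).

Definition c_exists (R : realType) (f : R -> R) (n : nat) : Prop :=
  (@lebesgue_measure R).-integrable (@halfline R) (fun r => (f r * r ^+ n.+1)%:E).

Definition cmom (R : realType) (f : R -> R) (n : nat) : R :=
  2 * (pi : R) * Rintegral (@lebesgue_measure R) (@halfline R) (fun r => f r * r ^+ n.+1).

Definition cond1 (R : realType) (f : R -> R) : Prop :=
  (exists F : R, forall r : R, 0 <= r -> 0 <= f r <= F) /\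
  c_exists f 0 /\ 0 < cmom f 0.

Definition Iintegrand (R : realType) (f : R -> R) (a p : R) (n k l : nat) (r : R) : R :=
  f r ^+ k * gfun a p r ^+ l * r ^+ (2 * n).+1.

Definition I_exists (R : realType) (f : R -> R) (a p : R) (n k l : nat) : Prop :=
  (@lebesgue_measure R).-integrable (@halfline R) (fun r => (Iintegrand f a p n k l r)%:E).

From HB Require Import structures.
From mathcomp Require Import all_boot all_order all_algebra.
From mathcomp Require Import all_classical all_reals all_analysis measurable_realfun.
From mathcomp Require Import ring.
Set Implicit Arguments. Unset Strict Implicit. Unset Printing Implicit Defensive.
Import Order.TTheory GRing.Theory Num.Theory.
Local Open Scope classical_set_scope.
Local Open Scope ring_scope.

(* The integrand of I_{n,k,l} is, on [0, oo), a bounded measurable function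
   times an integrable one.  For l >= 1 the bounded factor is f^k g^(l-1)
   <= F^k a^(l-1) and the integrable one is g(r) r^(2n+1): from r^m <= m! e^r
   and 2r - p r^2 <= 1/p we get r^m e^(-p r^2) <= m! e^(1/p) e^(-r).  For
   l = 0 the bounded factor is f^(k-1) and the integrable one f(r) r^(2n+1),
   whose integrability is the existence of c_(2n).  Measurability of f itself
   comes from that of f(r) r, which is part of the existence of c_0. *)

Lemma bounded_in_le (T : Type) (R : realType) (A : set T) (h : T -> R) (M : R) :
  (forall x, A x -> `|h x| <= M) -> [bounded h x | x in A].
Proof.
move=> hM; rewrite /bounded_near; near=> N => x Ax /=.
by apply: le_trans (hM x Ax) _; near: N; apply: nbhs_pinfty_ge; exact: num_real.
Unshelve. all: end_near. Qed.

Lemma exprn_le_fact_expR (R : realType) (m : nat) (x : R) : 0 <= x ->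
  x ^+ m <= m`!%:R * expR x.
Proof.
move=> x0; case: m => [|m]; first by rewrite expr0 fact0 mul1r -expR0 ler_expR.
rewrite mulrC -ler_pdivrMr ?ltr0n ?fact_gt0 //.
by apply: le_trans (expR_ge1Dxn m x0); rewrite lerDr.
Qed.

Lemma exprn_gauss_le (R : realType) (p x : R) (m : nat) : 0 < p -> 0 <= x ->
  x ^+ m * expR (- (p * x ^+ 2)) <= m`!%:R * expR p^-1 * expR (- x).
Proof.
move=> p0 x0.
have quad_le : 2 * x - p * x ^+ 2 <= p^-1.
  rewrite -subr_ge0.
  have -> : p^-1 - (2 * x - p * x ^+ 2) = (p * x - 1) ^+ 2 / p.
    by field; rewrite gt_eqF.
  by rewrite divr_ge0 ?sqr_ge0 ?ltW.
apply: le_trans (_ : m`!%:R * expR x * expR (- (p * x ^+ 2)) <= _).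
  by rewrite ler_wpM2r ?expR_ge0 ?exprn_le_fact_expR.
have -> : m`!%:R * expR x * expR (- (p * x ^+ 2)) =
          m`!%:R * expR (2 * x - p * x ^+ 2) * expR (- x).
  by rewrite -!mulrA -!expRD; congr (_ * expR _); ring.
by rewrite ler_wpM2r ?expR_ge0 // ler_wpM2l ?ler0n // ler_expR.
Qed.

Lemma halflineE (R : realType) (r : R) : halfline r = (0 <= r).
Proof. by rewrite /halfline /= in_itv /= andbT. Qed.

Lemma integrableMr_le d (T : measurableType d) (R : realType)
    (mu : {measure set T -> \bar R}) (D : set T) (h u : T -> R) (M : R) :
  measurable D -> measurable_fun D h -> (forall x, D x -> `|h x| <= M) ->
  mu.-integrable D (fun x => (u x)%:E) -> mu.-integrable D (fun x => (h x * u x)%:E).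
Proof.
move=> mD mh hM iu.
have := integrableMr mD mh (bounded_in_le hM) iu.
by apply: eq_integrable => // x _; rewrite /= EFinM.
Qed.

Lemma measurable_fun_halfline_mulr_id (R : realType) (f : R -> R) :
  measurable_fun (@halfline R) (fun r => f r * r) ->
  measurable_fun (@halfline R) f.
Proof.
(* Off the null set {0}, f r = (f r * r) / r. *)
move=> mfr; apply/measurable_fun_itv_obnd_cbndP.
have mfr' : measurable_fun (`]0, +oo[ : set R) (fun r => f r * r).
  apply: measurable_funS mfr => //; first exact: measurable_itv.
  by move=> x; rewrite /halfline /= !in_itv /= !andbT => /ltW.
have minv : measurable_fun (`]0, +oo[ : set R) GRing.inv.
  apply: open_continuous_measurable_fun; first exact: interval_open.
  move=> x; rewrite inE /= in_itv /= andbT => x0.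
  by apply: inv_continuous; rewrite gt_eqF.
apply: (eq_measurable_fun (fun r => f r * r * r^-1)); last exact: measurable_funM.
by move=> x; rewrite inE /= in_itv /= andbT => x0; rewrite mulfK ?gt_eqF.
Qed.

Lemma integrable_expRN_halfline (R : realType) :
  (@lebesgue_measure R).-integrable (@halfline R) (fun r => (expR (- r))%:E).
Proof.
have : (@lebesgue_measure R).-integrable (@halfline R) (EFin \o exponential_pdf 1).
  apply: integrableS (integrable_exponential_pdf ltr01) => //.
  exact: measurable_itv.
apply: eq_integrable; first exact: measurable_itv.
move=> x; rewrite inE halflineE => x0.
by rewrite /= exponential_pdfE // mulN1r mul1r.
Qed.

Lemma measurable_gfun (R : realType) (a p : R) : measurable_fun setT (gfun a p).
Proof.
apply: measurable_funM => //; apply: measurableT_comp; first exact: measurable_expR.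
by apply: measurableT_comp => //; apply: measurable_funM => //; exact: measurable_funX.
Qed.

Lemma gfun_ge0_le (R : realType) (a p r : R) : 0 <= a -> 0 <= p ->
  0 <= gfun a p r <= a.
Proof.
move=> a0 p0; rewrite /gfun mulr_ge0 ?expR_ge0 //=.
by rewrite ler_piMr // expR_le1 oppr_le0 mulr_ge0 ?sqr_ge0.
Qed.

Lemma integrable_gfunMXn (R : realType) (a p : R) (m : nat) : 0 < p ->
  (@lebesgue_measure R).-integrable (@halfline R) (fun r => (gfun a p r * r ^+ m)%:E).
Proof.
move=> p0; set K := `|a| * (m`!%:R * expR p^-1).
have mg : measurable_fun (@halfline R) (fun r => (gfun a p r * r ^+ m)%:E).
  apply/measurable_EFinP; apply: measurable_funM; last exact: measurable_funX.
  exact: measurable_funTS (measurable_gfun a p).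
apply: (le_integrable _ _ _ (integrableZl _ K (integrable_expRN_halfline R)));
  [exact: measurable_itv | exact: mg | | exact: measurable_itv].
move=> r; rewrite halflineE => r0.
rewrite lee_fin /K /gfun -!mulrA !normrM normr_id ler_wpM2l //.
rewrite !ger0_norm ?expR_ge0 ?exprn_ge0 // mulrC mulrA.
exact: exprn_gauss_le.
Qed.

Section bounded_profile.
Variables (R : realType) (f : R -> R) (F : R).
Hypothesis f_bnd : forall r, 0 <= r -> 0 <= f r <= F.
Hypothesis mf : measurable_fun (@halfline R) f.

Lemma normr_fX_le (k : nat) (r : R) : 0 <= r -> `|f r ^+ k| <= F ^+ k.
Proof.
move=> /f_bnd /andP[f0 fF]; rewrite normrX ger0_norm //.
by rewrite lerXn2r // nnegrE (le_trans f0).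
Qed.

Lemma I_exists_gauss (a p : R) (n k l : nat) : 0 <= a -> 0 < p ->
  I_exists f a p n k l.+1.
Proof.
move=> a0 p0.
apply: (@eq_integrable _ _ _ (@lebesgue_measure R) _ _
  (fun r => (f r ^+ k * gfun a p r ^+ l * (gfun a p r * r ^+ (2 * n).+1))%:E)).
- exact: measurable_itv.
- by move=> r _; rewrite /Iintegrand [gfun a p r ^+ l.+1]exprSr !mulrA.
apply: (integrableMr_le (M := F ^+ k * a ^+ l)).
- exact: measurable_itv.
- have mg := measurable_funTS (D := @halfline R) (measurable_gfun a p).
  exact: measurable_funM (measurable_funX k mf) (measurable_funX l mg).
- move=> r; rewrite halflineE => r0.
  have /andP[g0 ga] := gfun_ge0_le r a0 (ltW p0).
  rewrite normrM ler_pM ?normr_ge0 ?normr_fX_le // normrX ger0_norm //.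
  by rewrite lerXn2r // nnegrE (le_trans g0).
- exact: integrable_gfunMXn.
Qed.

Lemma I_exists_unweighted (a p : R) (n k : nat) : c_exists f (2 * n) ->
  I_exists f a p n k.+1 0.
Proof.
move=> cn.
apply: (@eq_integrable _ _ _ (@lebesgue_measure R) _ _
  (fun r => (f r ^+ k * (f r * r ^+ (2 * n).+1))%:E)).
- exact: measurable_itv.
- by move=> r _; rewrite /Iintegrand expr0 mulr1 [f r ^+ k.+1]exprSr !mulrA.
apply: (integrableMr_le (M := F ^+ k)).
- exact: measurable_itv.
- exact: measurable_funX.
- by move=> r; rewrite halflineE; exact: normr_fX_le.
- exact: cn.
Qed.

End bounded_profile.

Theorem lemma3 (R : realType) (a p : R) (ha : 0 < a) (hp : 0 < p) (f : R -> R) :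
  cond1 f ->
  (forall n k l : nat, (0 < l)%N -> I_exists f a p n k l) /\
  (forall n : nat, c_exists f (2 * n) ->
     forall k : nat, (0 < k)%N -> I_exists f a p n k 0).
Proof.
move=> [[F f_bnd] [c0 _]].
have mf : measurable_fun (@halfline R) f.
  apply: measurable_fun_halfline_mulr_id; apply/measurable_EFinP.
  exact: (measurable_int _ c0).
split=> [n k [//|l] _ | n cn [//|k] _].
- by apply: (I_exists_gauss f_bnd mf) => //; exact: ltW.
- exact: (I_exists_unweighted f_bnd mf).
Qed.
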